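(* Let $(H,B_1,B_2)$ be a Rota-Baxter system of Hopf algebras with cocycle $\sigma$. If $\sigma$ is surjective, then $(H,B_2)$ and $(H,B_1\circ S)$ are Rota-Baxter Hopf algebras.
   Context: $\mathbb{F}$ is a field of characteristic $0$; Sweedler notation $\Delta(a)=a_1\otimes a_2$. A Rota-Baxter system of Hopf algebras is a triple $(H,B_1,B_2)$ where $(H,\cdot,1,\Delta,\epsilon,S)$ is a cocommutative Hopf algebra and $B_1,B_2:H\to H$ are coalgebra homomorphisms with $B_1(1)=B_2(1)=1$ such that for all $a,b\in H$: $B_1(a)B_1(b)=B_1(B_1(a_1)bS(B_2(a_2)))$ and $B_2(a)B_2(b)=B_2(B_1(a_1)bS(B_2(a_2)))$. Its cocycle is $\sigma(a)=B_1(a_1)S(B_2(a_2))$. A Rota-Baxter Hopf algebra is a pair $(H,B)$ where $H$ is a cocommutative Hopf algebra and $B:H\to H$ is a coalgebra homomorphism with $B(a)B(b)=B(a_1B(a_2)\,b\,S(B(a_3)))$ for all $a,b\in H$. *)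

From HB Require Import structures.
From mathcomp Require Import all_boot all_order all_algebra.
Set Implicit Arguments. Unset Strict Implicit. Unset Printing Implicit Defensive.
Import GRing.Theory.
Local Open Scope ring_scope.

(* The coproduct Delta(a) in H (x) H is represented by a finite list of pairs
   [(a1_i, a2_i)] standing for \sum_i a1_i (x) a2_i (Sweedler notation).
   Equalities in H (x) H (resp. H (x) H (x) H) are expressed by testing against
   all bilinear (resp. trilinear) forms H x H -> F, which separate the points of
   the tensor product over a field. *)

Section Hopf.
Variables (F : fieldType) (H : algType F).

Definition bilinear_form (phi : H -> H -> F) : Prop :=
  (forall (k : F) (x y z : H), phi (k *: x + y) z = k * phi x z + phi y z) /\
  (forall (k : F) (x y z : H), phi x (k *: y + z) = k * phi x y + phi x z).

Definition trilinear_form (psi : H -> H -> H -> F) : Prop :=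
  (forall (k : F) (x y z w : H), psi (k *: x + y) z w = k * psi x z w + psi y z w) /\
  (forall (k : F) (x y z w : H), psi x (k *: y + z) w = k * psi x y w + psi x z w) /\
  (forall (k : F) (x y z w : H), psi x y (k *: z + w) = k * psi x y z + psi x y w).

Definition sw {V : zmodType} (cop : H -> seq (H * H)) (g : H -> H -> V) (a : H) : V :=
  \sum_(p <- cop a) g p.1 p.2.

Definition lin_map (f : H -> H) : Prop :=
  forall (k : F) (x y : H), f (k *: x + y) = k *: f x + f y.

Definition cocomm_hopf (cop : H -> seq (H * H)) (eps : H -> F) (S : H -> H) : Prop :=
      (forall phi, bilinear_form phi -> forall (k : F) (a b : H),
         sw cop phi (k *: a + b) = k * sw cop phi a + sw cop phi b) /\
      (* coassociativity: (a_1)_1 (x) (a_1)_2 (x) a_2 = a_1 (x) (a_2)_1 (x) (a_2)_2 *)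
      (forall psi, trilinear_form psi -> forall a : H,
         \sum_(p <- cop a) \sum_(q <- cop p.1) psi q.1 q.2 p.2 =
         \sum_(p <- cop a) \sum_(q <- cop p.2) psi p.1 q.1 q.2) /\
      (forall (k : F) (a b : H), eps (k *: a + b) = k * eps a + eps b) /\
      (forall a : H, sw cop (fun x y => eps x *: y) a = a /\
                     sw cop (fun x y => eps y *: x) a = a) /\
      (forall phi, bilinear_form phi -> forall a b : H,
         sw cop phi (a * b) =
         \sum_(p <- cop a) \sum_(q <- cop b) phi (p.1 * q.1) (p.2 * q.2)) /\
      (forall phi, bilinear_form phi -> sw cop phi 1 = phi 1 1) /\
      ((forall a b : H, eps (a * b) = eps a * eps b) /\ eps 1 = 1) /\
      (lin_map S /\
      (forall a : H, sw cop (fun x y => S x * y) a = eps a *: 1 /\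
                     sw cop (fun x y => x * S y) a = eps a *: 1)) /\
      (forall phi, bilinear_form phi -> forall a : H,
         sw cop phi a = sw cop (fun x y => phi y x) a).

Definition coalg_hom (cop : H -> seq (H * H)) (eps : H -> F) (B : H -> H) : Prop :=
  [/\ lin_map B,
      (forall phi, bilinear_form phi -> forall a : H,
         sw cop phi (B a) = sw cop (fun x y => phi (B x) (B y)) a) &
      (forall a : H, eps (B a) = eps a)].

Definition RB_system (cop : H -> seq (H * H)) (eps : H -> F) (S : H -> H)
  (B1 B2 : H -> H) : Prop :=
  [/\ cocomm_hopf cop eps S,
      coalg_hom cop eps B1 /\ coalg_hom cop eps B2,
      B1 1 = 1 /\ B2 1 = 1,
      (forall a b : H,
         B1 a * B1 b = B1 (sw cop (fun x y => B1 x * b * S (B2 y)) a)) &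
      (forall a b : H,
         B2 a * B2 b = B2 (sw cop (fun x y => B1 x * b * S (B2 y)) a))].

Definition RB_cocycle (cop : H -> seq (H * H)) (S : H -> H) (B1 B2 : H -> H)
  (a : H) : H :=
  sw cop (fun x y => B1 x * S (B2 y)) a.

Definition RB_hopf (cop : H -> seq (H * H)) (eps : H -> F) (S : H -> H)
  (B : H -> H) : Prop :=
  [/\ cocomm_hopf cop eps S,
      coalg_hom cop eps B &
      (forall a b : H,
         B a * B b =
         B (\sum_(p <- cop a) \sum_(q <- cop p.2) p.1 * B q.1 * b * S (B q.2)))].

End Hopf.

(* Write c = sigma(a).  The Rota-Baxter identities with b = 1 give
   B_i(sigma a) = B_i a, and sigma is a coalgebra map, so
   c_1 B_2(c_2) b S(B_2 c_3) = B_1(a_1) S(B_2 a_2) B_2(a_3) b S(B_2 a_4)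
   = B_1(a_1) b S(B_2 a_2); the identity for B_2 then turns B_2(c) B_2(b) =
   B_2(a) B_2(b) into the Rota-Baxter identity of (H, B_2).  For B_1 o S one
   writes S(c) = sigma(a) and argues in the same way after applying the
   antimultiplicative involution S, reordering Sweedler factors by
   cocommutativity.
   Identities in H (x) H are only available through F-valued bilinear forms;
   they transfer to H-valued multilinear maps because linear forms separate
   the points of a vector space (Zorn's lemma). *)

From HB Require Import structures.
From mathcomp Require Import all_boot all_order all_algebra.
From mathcomp Require classical_sets boolp.
Set Implicit Arguments. Unset Strict Implicit. Unset Printing Implicit Defensive.
Import GRing.Theory.
Local Open Scope ring_scope.

Section LinearSums.
Variables (R : pzRingType) (U : lmodType R) (V : zmodType) (s : GRing.Scale.law R V).
Variable f : U -> V.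
Hypothesis f_lin : linear_for s f.
Let fA : {additive U -> V} :=
  HB.pack f (GRing.isZmodMorphism.Build _ _ f (zmod_morphism_linear f_lin)).

Lemma linear_for_sum (I : Type) (r : seq I) (G : I -> U) :
  f (\sum_(i <- r) G i) = \sum_(i <- r) f (G i).
Proof. exact: (raddf_sum fA). Qed.

End LinearSums.

Lemma linear_scale (R : pzRingType) (U V : lmodType R) (f : U -> V) :
  linear f -> forall k x, f (k *: x) = k *: f x.
Proof. exact: scalable_linear. Qed.

Lemma scalar_scale (R : pzRingType) (U : lmodType R) (l : U -> R) :
  scalar l -> forall k x, l (k *: x) = k * l x.
Proof. exact: scalable_linear. Qed.

(** * Linear forms separate points *)

Section LinearFormSeparation.
Variables (F : fieldType) (V : lmodType F).

Definition lin_closed (W : V -> Prop) := forall k x y, W x -> W y -> W (k *: x + y).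

Definition maximal_avoiding (h : V) (A : V -> Prop) :=
  (lin_closed A /\ ~ A h) /\
  forall B, classical_sets.proper A B -> ~ (lin_closed B /\ ~ B h).

Lemma exists_maximal_avoiding (h : V) : exists A, maximal_avoiding h A.
Proof.
apply: classical_sets.Zorn_bigcup => C CP Ctot; split.
- move=> k x y [X CX Xx] [Y CY Yy].
  have [XY|YX] := Ctot X Y CX CY.
  + by exists Y => //; apply: (proj1 (CP Y CY)) => //; apply: XY.
  + by exists X => //; apply: (proj1 (CP X CX)) => //; apply: YX.
- by move=> [X CX Xh]; apply: (proj2 (CP X CX)).
Qed.

Section MaximalSubspace.
Variables (h : V) (A : V -> Prop).
Hypotheses (h_neq0 : h != 0) (A_max : maximal_avoiding h A).
Let A_closed : lin_closed A := A_max.1.1.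
Let A_h : ~ A h := A_max.1.2.

Lemma maximal_subspace0 : A 0.
Proof.
have [[x Ax]|A_empty] := boolp.pselect (exists x, A x).
  by have := A_closed (-1) Ax Ax; rewrite scaleN1r addNr.
exfalso; apply: (A_max.2 (fun u => u = 0)).
  split=> [x Ax|/(_ 0 erefl) A0]; case: A_empty; by [exists x | exists 0].
split=> [k x y -> ->|/eqP]; first by rewrite scaler0 addr0.
by rewrite (negbTE h_neq0).
Qed.

Lemma maximal_subspaceZ k x : A x -> A (k *: x).
Proof. by move=> Ax; have := A_closed k Ax maximal_subspace0; rewrite addr0. Qed.

Lemma maximal_subspace_coord v : exists c, A (v - c *: h).
Proof.
apply: boolp.contrapT => no_coord.
pose W u := exists k, A (u - k *: v).
have W_closed : lin_closed W.
  move=> k x y [c1 Ax] [c2 Ay]; exists (k * c1 + c2).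
  have := A_closed k Ax Ay.
  by rewrite scalerDl -scalerA scalerBr addrACA opprD.
have W_h : ~ W h.
  move=> [k Ahv]; apply: no_coord.
  have k_neq0 : k != 0.
    by apply: contra_notN A_h => /eqP k0; move: Ahv; rewrite k0 scale0r subr0.
  exists k^-1; have := maximal_subspaceZ (- k^-1) Ahv.
  by rewrite scalerBr scalerA mulNr mulVf // scaleN1r opprK scaleNr addrC.
have [W_A|W_A] := boolp.pselect (forall u, W u -> A u).
  apply: no_coord; exists 0; rewrite scale0r subr0; apply: W_A.
  by rewrite /W; exists 1; rewrite scale1r subrr; apply: maximal_subspace0.
apply: (A_max.2 W) (conj W_closed W_h); split=> // u Au.
by rewrite /W; exists 0; rewrite scale0r subr0.
Qed.

Lemma maximal_subspace_coord_uniq v c c' :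
  A (v - c *: h) -> A (v - c' *: h) -> c = c'.
Proof.
move=> Ac Ac'; apply: boolp.contrapT => /eqP neq_cc'.
have := A_closed (-1) Ac' Ac.
rewrite scaleN1r opprB addrA subrK -scalerBl => /(maximal_subspaceZ (c' - c)^-1).
by rewrite scalerA mulVf ?scale1r // subr_eq0 eq_sym.
Qed.

End MaximalSubspace.

Lemma scalar_separates (h : V) : h != 0 -> exists l : V -> F, scalar l /\ l h = 1.
Proof.
move=> h_neq0; have [A A_max] := exists_maximal_avoiding h.
have coord := maximal_subspace_coord h_neq0 A_max.
have uniq := maximal_subspace_coord_uniq h_neq0 A_max.
pose l v := projT1 (boolp.cid (coord v)).
have lP v : A (v - l v *: h) by apply: (projT2 (boolp.cid (coord v))).
exists l; split.
  move=> k x y; apply/esym/(uniq (k *: x + y)); last exact: lP.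
  have := A_max.1.1 k _ _ (lP x) (lP y).
  by rewrite scalerBr scalerDl -scalerA addrACA opprD.
apply/esym/(uniq h); last exact: lP.
by rewrite scale1r subrr; apply: (maximal_subspace0 h_neq0 A_max).
Qed.

Lemma scalar_ext (u v : V) : (forall l : V -> F, scalar l -> l u = l v) -> u = v.
Proof.
move=> luv; apply/eqP; rewrite -subr_eq0; apply/negPn/negP => /scalar_separates.
move=> [l [l_scalar /eqP]]; rewrite (zmod_morphism_linear l_scalar) luv // subrr.
by rewrite eq_sym oner_eq0.
Qed.

End LinearFormSeparation.

(** * Sweedler calculus in a cocommutative Hopf algebra *)

Section SweedlerCalculus.
Variables (F : fieldType) (H : algType F) (cop : H -> seq (H * H)).

Definition bilinear_map (g : H -> H -> H) :=
  (forall y, linear (g^~ y)) /\ (forall x, linear (g x)).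

Definition trilinear_map (g : H -> H -> H -> H) :=
  [/\ forall y z, linear (fun x => g x y z), forall x z, linear (fun y => g x y z)
    & forall x y, linear (g x y)].

Definition quadrilinear_map (g : H -> H -> H -> H -> H) :=
  [/\ forall y z w, linear (fun x => g x y z w),
      forall x z w, linear (fun y => g x y z w),
      forall x y w, linear (fun z => g x y z w) & forall x y z, linear (g x y z)].

(* [sw3 g a] is g(a_1, a_2, a_3), obtained by expanding the coproduct on the
   right leg; [sw4] likewise. *)
Definition sw3 (g : H -> H -> H -> H) (a : H) : H :=
  \sum_(p <- cop a) sw cop (g p.1) p.2.

Definition sw4 (g : H -> H -> H -> H -> H) (a : H) : H :=
  \sum_(p <- cop a) sw3 (g p.1) p.2.

Definition comultiplicative (f : H -> H) :=
  linear f /\ forall g, bilinear_map g -> forall a,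
    sw cop g (f a) = sw cop (fun x y => g (f x) (f y)) a.

Ltac multilinear :=
  repeat split; repeat progress (intros; hnf); simpl;
  repeat (first
    [ progress rewrite ?mulrDl ?mulrDr -?scalerAl -?scalerAr
    | match goal with f_lin : linear _ |- _ => progress rewrite ?f_lin end
    | match goal with g_bil : bilinear_map _ |- _ =>
        progress rewrite ?(proj1 g_bil) ?(proj2 g_bil) end ]);
  try done.

Lemma eq_sw (g g' : H -> H -> H) a :
  (forall x y, g x y = g' x y) -> sw cop g a = sw cop g' a.
Proof. by move=> gg'; apply: eq_bigr => p _; rewrite gg'. Qed.

Lemma eq_sw3 (g g' : H -> H -> H -> H) a :
  (forall x y z, g x y z = g' x y z) -> sw3 g a = sw3 g' a.
Proof. by move=> gg'; apply: eq_bigr => p _; apply: eq_sw. Qed.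

Lemma sw_mull c (g : H -> H -> H) a : sw cop (fun x y => c * g x y) a = c * sw cop g a.
Proof. by rewrite /sw mulr_sumr. Qed.

Lemma sw_mulr c (g : H -> H -> H) a : sw cop (fun x y => g x y * c) a = sw cop g a * c.
Proof. by rewrite /sw mulr_suml. Qed.

Lemma sw_scale k (g : H -> H -> H) a : sw cop (fun x y => k *: g x y) a = k *: sw cop g a.
Proof. by rewrite /sw scaler_sumr. Qed.

Lemma sw_linear_integrand (G : H -> H -> H -> H) a :
  (forall y z, linear (fun x => G x y z)) -> linear (fun x => sw cop (G x) a).
Proof.
move=> G_lin k x x'; rewrite /sw scaler_sumr -big_split /=.
by apply: eq_bigr => p _; rewrite G_lin.
Qed.

Lemma lin_sw3 (f : H -> H) (g : H -> H -> H -> H) a :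
  linear f -> f (sw3 g a) = sw3 (fun x y z => f (g x y z)) a.
Proof.
move=> f_lin; rewrite /sw3 (linear_for_sum f_lin); apply: eq_bigr => p _.
by rewrite /sw (linear_for_sum f_lin).
Qed.

Lemma bilinear_suml (g : H -> H -> H) (g_bil : bilinear_map g) (I : Type) (r : seq I)
  (G : I -> H) y : g (\sum_(i <- r) G i) y = \sum_(i <- r) g (G i) y.
Proof. exact: (linear_for_sum (g_bil.1 y)). Qed.

Lemma bilinear_sumr (g : H -> H -> H) (g_bil : bilinear_map g) (I : Type) (r : seq I)
  (G : I -> H) x : g x (\sum_(i <- r) G i) = \sum_(i <- r) g x (G i).
Proof. exact: (linear_for_sum (g_bil.2 x)). Qed.

Lemma scalar_comp_bilinear (l : H -> F) (g : H -> H -> H) :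
  scalar l -> bilinear_map g -> bilinear_form (fun x y => l (g x y)).
Proof. by move=> l_lin [g_linl g_linr]; split=> k x y z /=; rewrite ?g_linl ?g_linr l_lin. Qed.

Lemma scalar_sw (l : H -> F) (l_lin : scalar l) (g : H -> H -> H) a :
  l (sw cop g a) = sw cop (fun x y => l (g x y)) a.
Proof. by rewrite /sw (linear_for_sum l_lin). Qed.

Variables (eps : H -> F) (S : H -> H).

Lemma coalg_hom_comp f g :
  coalg_hom cop eps f -> coalg_hom cop eps g -> coalg_hom cop eps (f \o g).
Proof.
move=> [f_lin f_cop f_eps] [g_lin g_cop g_eps]; split=> [k x y|phi phi_bil a|a] /=.
- by rewrite g_lin f_lin.
- rewrite f_cop // g_cop //; case: phi_bil => phi_linl phi_linr.
  by split=> k x y z; rewrite f_lin ?phi_linl ?phi_linr.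
- by rewrite f_eps g_eps.
Qed.

Lemma comultiplicative_comp f1 f2 :
  comultiplicative f1 -> comultiplicative f2 -> comultiplicative (fun x => f1 (f2 x)).
Proof.
move=> [f1_lin f1_cop] [f2_lin f2_cop]; split=> [k x y|g g_bil a].
  by rewrite f2_lin f1_lin.
by rewrite f1_cop // f2_cop //; multilinear.
Qed.

Lemma coalg_hom_comultiplicative f : coalg_hom cop eps f -> comultiplicative f.
Proof.
case=> f_lin f_cop _; split=> // g g_bil a; apply: scalar_ext => l l_lin.
rewrite !(scalar_sw l_lin); exact: f_cop (scalar_comp_bilinear l_lin g_bil) a.
Qed.

Section CocommutativeHopf.
Hypothesis hopf : cocomm_hopf cop eps S.

Lemma counit_scalar : scalar eps.
Proof. by case: hopf => _ [_ []]. Qed.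
Lemma counitl a : sw cop (fun x y => eps x *: y) a = a.
Proof. by case: hopf => _ [_ [_ [counit _]]]; case: (counit a). Qed.
Lemma counitr a : sw cop (fun x y => eps y *: x) a = a.
Proof. by case: hopf => _ [_ [_ [counit _]]]; case: (counit a). Qed.
Lemma counitM a b : eps (a * b) = eps a * eps b.
Proof. by case: hopf => _ [_ [_ [_ [_ [_ [[]]]]]]]. Qed.
Lemma counit1 : eps 1 = 1.
Proof. by case: hopf => _ [_ [_ [_ [_ [_ [[]]]]]]]. Qed.
Lemma antipode_linear : linear S.
Proof. by case: hopf => _ [_ [_ [_ [_ [_ [_ [[]]]]]]]]. Qed.
(* Linearity facts kept in the context are used by [multilinear]. *)
Let S_lin := antipode_linear.
Lemma antipodel a : sw cop (fun x y => S x * y) a = eps a *: 1.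
Proof. by case: hopf => _ [_ [_ [_ [_ [_ [_ [[_ antipode] _]]]]]]]; case: (antipode a). Qed.
Lemma antipoder a : sw cop (fun x y => x * S y) a = eps a *: 1.
Proof. by case: hopf => _ [_ [_ [_ [_ [_ [_ [[_ antipode] _]]]]]]]; case: (antipode a). Qed.

Lemma sw_linear g : bilinear_map g -> linear (sw cop g).
Proof.
move=> g_bil k a b; apply: scalar_ext => l l_lin.
rewrite l_lin !(scalar_sw l_lin); case: hopf => cop_lin _.
exact: (cop_lin _ (scalar_comp_bilinear l_lin g_bil)).
Qed.

Lemma sw_coassoc g a : trilinear_map g ->
  \sum_(p <- cop a) \sum_(q <- cop p.1) g q.1 q.2 p.2 = sw3 g a.
Proof.
move=> [g1 g2 g3]; apply: scalar_ext => l l_lin.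
rewrite /sw3 !(linear_for_sum l_lin).
under eq_bigr do rewrite (linear_for_sum l_lin).
under [RHS]eq_bigr do rewrite (scalar_sw l_lin).
case: hopf => _ [cop_coassoc _]; apply: (cop_coassoc (fun x y z => l (g x y z))).
by split; [|split]; move=> k x y z w; rewrite ?g1 ?g2 ?g3 l_lin.
Qed.

Lemma sw_cocomm g a : bilinear_map g -> sw cop g a = sw cop (fun x y => g y x) a.
Proof.
move=> g_bil; apply: scalar_ext => l l_lin; rewrite !(scalar_sw l_lin).
case: hopf => _ [_ [_ [_ [_ [_ [_ [_ cop_comm]]]]]]].
exact: (cop_comm _ (scalar_comp_bilinear l_lin g_bil)).
Qed.

Lemma sw_mul g a b : bilinear_map g ->
  sw cop g (a * b) = \sum_(p <- cop a) \sum_(q <- cop b) g (p.1 * q.1) (p.2 * q.2).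
Proof.
move=> g_bil; apply: scalar_ext => l l_lin.
rewrite (scalar_sw l_lin) (linear_for_sum l_lin).
under [RHS]eq_bigr do rewrite (linear_for_sum l_lin).
case: hopf => _ [_ [_ [_ [cop_mul _]]]].
exact: (cop_mul _ (scalar_comp_bilinear l_lin g_bil)).
Qed.

Lemma sw_one g : bilinear_map g -> sw cop g 1 = g 1 1.
Proof.
move=> g_bil; apply: scalar_ext => l l_lin; rewrite (scalar_sw l_lin).
case: hopf => _ [_ [_ [_ [_ [cop_one _]]]]].
exact: (cop_one _ (scalar_comp_bilinear l_lin g_bil)).
Qed.

Lemma sw_counitl (f : H -> H) a : linear f -> sw cop (fun x y => eps x *: f y) a = f a.
Proof.
move=> f_lin; rewrite -{2}(counitl a) /sw (linear_for_sum f_lin).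
by apply: eq_bigr => p _; rewrite (linear_scale f_lin).
Qed.

Lemma sw_counitr (f : H -> H) a : linear f -> sw cop (fun x y => eps y *: f x) a = f a.
Proof.
move=> f_lin; rewrite -{2}(counitr a) /sw (linear_for_sum f_lin).
by apply: eq_bigr => p _; rewrite (linear_scale f_lin).
Qed.

Lemma bilinear_sw_integrand (G : H -> H -> H -> H) :
  trilinear_map G -> bilinear_map (fun x y => sw cop (G x) y).
Proof.
move=> [G1 G2 G3]; split=> [y|x]; first exact: sw_linear_integrand.
exact: (sw_linear (conj (G2 x) (G3 x))).
Qed.

Lemma trilinear_sw_integrand (G : H -> H -> H -> H -> H) :
  quadrilinear_map G -> trilinear_map (fun x y z => sw cop (G x y) z).
Proof.
move=> [G1 G2 G3 G4]; split=> [y z|x z|x y]; try exact: sw_linear_integrand.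
exact: (sw_linear (conj (G3 x y) (G4 x y))).
Qed.

Lemma sw3_swap23 g a : trilinear_map g -> sw3 g a = sw3 (fun x y z => g x z y) a.
Proof. by move=> [_ g2 g3]; apply: eq_bigr => p _; apply: sw_cocomm; split. Qed.

Lemma sw3_swap12 g a : trilinear_map g -> sw3 g a = sw3 (fun x y z => g y x z) a.
Proof.
move=> [g1 g2 g3]; rewrite -[LHS]sw_coassoc -?[RHS]sw_coassoc; try by split.
apply: eq_bigr => p _.
exact: (@sw_cocomm (fun x y => g x y p.2) _ (conj (g1^~ p.2) (g2^~ p.2))).
Qed.

Lemma sw4_coassoc g a : quadrilinear_map g -> sw4 g a =
  \sum_(p <- cop a) \sum_(r <- cop p.1) \sum_(s <- cop p.2) g r.1 r.2 s.1 s.2.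
Proof.
move=> g_quad; rewrite -[sw4 g a]/(sw3 (fun x y z => sw cop (g x y) z) a).
by rewrite -sw_coassoc //; apply: trilinear_sw_integrand.
Qed.

Lemma sw4_swap23 g a : quadrilinear_map g -> sw4 g a = sw4 (fun x y z w => g x z y w) a.
Proof. by move=> [g1 g2 g3 g4]; apply: eq_bigr => p _; apply: sw3_swap12; split. Qed.

Lemma sw4_swap34 g a : quadrilinear_map g -> sw4 g a = sw4 (fun x y z w => g x y w z) a.
Proof. by move=> [g1 g2 g3 g4]; apply: eq_bigr => p _; apply: sw3_swap23; split. Qed.

(** * The antipode *)

Lemma antipode1 : S 1 = 1.
Proof.
have xSy : bilinear_map (fun x y => x * S y) by multilinear.
by have := sw_one xSy; rewrite antipoder counit1 scale1r mul1r => <-.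
Qed.

Lemma counit_antipode a : eps (S a) = eps a.
Proof.
have := congr1 eps (antipodel a).
rewrite (scalar_sw counit_scalar) (scalar_scale counit_scalar) counit1 mulr1 => <-.
rewrite -{1}(counitr a) /sw (linear_for_sum antipode_linear) (linear_for_sum counit_scalar).
apply: eq_bigr => p _.
by rewrite counitM (linear_scale antipode_linear) (scalar_scale counit_scalar) mulrC.
Qed.

Lemma sw_mul_antipoder X a : sw cop (fun x y => X * x * S y) a = eps a *: X.
Proof.
rewrite (eq_sw (g' := fun x y => X * (x * S y))) => [|x y]; last by rewrite mulrA.
by rewrite sw_mull antipoder -scalerAr mulr1.
Qed.

(* By cocommutativity the factors regroup as (a_1 S a_2) (x) (a_3 S a_4). *)
Lemma sw4_antipode_cancel (k : H -> H -> H) a : bilinear_map k ->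
  \sum_(p <- cop a) \sum_(v <- cop p.1) \sum_(w <- cop p.2) k (v.1 * S w.2) (v.2 * S w.1)
  = eps a *: k 1 1.
Proof.
move=> k_bil; have [k_linl k_linr] := k_bil.
rewrite -(@sw4_coassoc (fun x y z w => k (x * S w) (y * S z))); last by multilinear.
transitivity (sw4 (fun x y z w => k (x * S y) (z * S w)) a).
  rewrite [RHS]sw4_swap23; last by multilinear.
  by rewrite [RHS]sw4_swap34; last by multilinear.
rewrite sw4_coassoc; last by multilinear.
transitivity (\sum_(p <- cop a) k (eps p.1 *: 1) (eps p.2 *: 1)).
  apply: eq_bigr => p _; rewrite -!antipoder /sw (bilinear_suml k_bil).
  by apply: eq_bigr => r _; rewrite (bilinear_sumr k_bil).
rewrite -(@sw_counitl (fun w => eps w *: k 1 1)); last first.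
  by move=> c x y; rewrite counit_scalar scalerDl scalerA.
apply: eq_bigr => p _.
by rewrite (linear_scale (k_linl _)) (linear_scale (k_linr _)) scalerA mulrC -scalerA.
Qed.

(* Delta(S a) = Delta(S a_1) (a_2 S a_5 (x) a_3 S a_4)
              = Delta(S a_1 a_2) (S a_4 (x) S a_3) = S a_2 (x) S a_1. *)
Lemma sw_antipode_flip g a :
  bilinear_map g -> sw cop g (S a) = sw cop (fun x y => g (S y) (S x)) a.
Proof.
move=> g_bil; have [g_linl g_linr] := g_bil.
pose twist x y w1 w2 := sw cop (fun t1 t2 => g (t1 * S w2) (t2 * S w1)) (S x * y).
have twist_bil w1 w2 : bilinear_map (fun t1 t2 => g (t1 * S w2) (t2 * S w1)).
  by multilinear.
have twist_quad : quadrilinear_map twist.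
  rewrite /twist; split=> *.
  - by move=> c x x'; rewrite antipode_linear mulrDl -scalerAl (sw_linear (twist_bil _ _)).
  - by move=> c x x'; rewrite mulrDr -scalerAr (sw_linear (twist_bil _ _)).
  - by apply: sw_linear_integrand; multilinear.
  - by apply: sw_linear_integrand; multilinear.
rewrite -{1}(@sw_counitr (fun x => sw cop g (S x)) a); last first.
  by move=> c x x'; rewrite antipode_linear (sw_linear g_bil).
transitivity (sw4 twist a).
  apply: eq_bigr => q _.
  have k_bil : bilinear_map (fun x y => sw cop (fun u v => g (u * x) (v * y)) (S q.1)).
    by split=> ?; apply: sw_linear_integrand; multilinear.
  rewrite (eq_sw (g' := fun u v => g (u * 1) (v * 1))) => [|*]; last by rewrite !mulr1.
  rewrite -(sw4_antipode_cancel q.2 k_bil).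
  apply: eq_bigr => p _; rewrite exchange_big /=; apply: eq_bigr => w _.
  rewrite /twist (sw_mul _ _ (twist_bil _ _)) exchange_big /=.
  by apply: eq_bigr => v _; apply: eq_bigr => r _; rewrite !mulrA.
rewrite sw4_coassoc // -(@sw_counitl (sw cop (fun u v => g (S v) (S u)))); last first.
  by apply: sw_linear; multilinear.
apply: eq_bigr => q _; rewrite exchange_big /= -sw_scale; apply: eq_bigr => s _.
rewrite /twist -(linear_for_sum (sw_linear (twist_bil _ _))).
rewrite -[X in sw _ _ X = _]/(sw cop (fun x y => S x * y) q.1) antipodel.
by rewrite (linear_scale (sw_linear (twist_bil _ _))) (sw_one (twist_bil _ _)) !mul1r.
Qed.

Lemma antipode_comultiplicative : comultiplicative S.
Proof.
split=> [|g g_bil a]; first exact: antipode_linear.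
by rewrite sw_antipode_flip // sw_cocomm //; multilinear.
Qed.

Lemma antipode_coalg_hom : coalg_hom cop eps S.
Proof.
split; [exact: antipode_linear | move=> phi [phi_linl phi_linr] a | exact: counit_antipode].
have phi1_bil : bilinear_map (fun x y => phi x y *: (1 : H)).
  by split=> ? k x y; rewrite ?phi_linl ?phi_linr scalerDl scalerA.
have := antipode_comultiplicative.2 _ phi1_bil a; rewrite /sw -!scaler_suml => /eqP.
by rewrite -subr_eq0 -scalerBl scaler_eq0 oner_eq0 orbF subr_eq0 => /eqP.
Qed.

Lemma antipode_mul_expand a b :
  S (a * b) = \sum_(p <- cop a) \sum_(r <- cop p.1) S (r.1 * b) * r.2 * S p.2.
Proof.
rewrite (@sw_coassoc (fun x y z => S (x * b) * y * S z)); last by multilinear.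
rewrite -{1}(@sw_counitr (fun x => S (x * b)) a); last by multilinear.
by apply: eq_bigr => p _; rewrite sw_mul_antipoder.
Qed.

Lemma antipodeM a b : S (a * b) = S b * S a.
Proof.
have Sxy : bilinear_map (fun x y => S x * y) by multilinear.
rewrite antipode_mul_expand -{1}(@sw_counitl (fun y => S b * S y) a); last by multilinear.
apply/esym/eq_bigr => p _.
transitivity (\sum_(q <- cop b) \sum_(r <- cop p.1) \sum_(s <- cop q.1)
               S (r.1 * s.1) * (r.2 * s.2) * S q.2 * S p.2).
  rewrite -{1}(counitl b) /sw (linear_for_sum antipode_linear) mulr_suml scaler_sumr.
  apply: eq_bigr => q _.
  rewrite (linear_scale antipode_linear) -!scalerAl scalerA -counitM -[S q.2]mul1r !scalerAl.
  rewrite -antipodel (sw_mul _ _ Sxy) !mulr_suml; apply: eq_bigr => r _.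
  by rewrite !mulr_suml mul1r.
rewrite exchange_big /=; apply: eq_bigr => r _.
rewrite (@sw_coassoc (fun x y z => S (r.1 * x) * (r.2 * y) * S z * S p.2)); last first.
  by multilinear.
rewrite -(@sw_counitr (fun x => S (r.1 * x) * r.2 * S p.2) b); last by multilinear.
apply: eq_bigr => q _.
rewrite (eq_sw (g' := fun u v => S (r.1 * q.1) * r.2 * u * S v * S p.2)) => [|*].
  by rewrite sw_mulr sw_mul_antipoder -!scalerAl.
by rewrite !mulrA.
Qed.

Lemma antipodeK a : S (S a) = a.
Proof.
rewrite -{1}(@sw_counitr (fun x => S (S x)) a); last by multilinear.
transitivity (\sum_(p <- cop a) \sum_(r <- cop p.1) S (S r.1) * S r.2 * p.2).
  rewrite (@sw_coassoc (fun x y z => S (S x) * S y * z)); last by multilinear.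
  apply: eq_bigr => p _.
  rewrite (eq_sw (g' := fun u v => S (S p.1) * (S u * v))) => [|*]; last by rewrite mulrA.
  by rewrite sw_mull antipodel -scalerAr mulr1.
rewrite -{2}(counitl a); apply: eq_bigr => p _.
rewrite -[LHS]/(sw cop (fun u v => S (S u) * S v * p.2) p.1).
rewrite (eq_sw (g' := fun u v => S (v * S u) * p.2)) => [|*]; last by rewrite antipodeM.
rewrite sw_mulr /sw -(linear_for_sum antipode_linear).
rewrite -[\sum_(i <- _) _]/(sw cop (fun u v => v * S u) p.1) -sw_cocomm; last by multilinear.
by rewrite antipoder (linear_scale antipode_linear) antipode1 -scalerAl mul1r.
Qed.

Lemma sw3_comultiplicative f g a : comultiplicative f -> trilinear_map g ->
  sw3 g (f a) = sw3 (fun x y z => g (f x) (f y) (f z)) a.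
Proof.
move=> [f_lin f_cop] g_tri; have [_ g2 g3] := g_tri.
rewrite /sw3 -[\sum_(p <- cop (f a)) _]/(sw cop (fun x y => sw cop (g x) y) (f a)).
rewrite f_cop; last exact: bilinear_sw_integrand.
by apply: eq_bigr => p _; rewrite f_cop //; split.
Qed.

Lemma sw_mul_comultiplicative f1 f2 g x y :
  comultiplicative f1 -> comultiplicative f2 -> bilinear_map g ->
  sw cop g (f1 x * f2 y) =
  \sum_(r <- cop x) \sum_(s <- cop y) g (f1 r.1 * f2 s.1) (f1 r.2 * f2 s.2).
Proof.
move=> [f1_lin f1_cop] [f2_lin f2_cop] g_bil; rewrite sw_mul //.
have h_bil : bilinear_map (fun u v => sw cop (fun s t => g (u * s) (v * t)) (f2 y)).
  by split=> ?; apply: sw_linear_integrand; multilinear.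
rewrite -[LHS]/(sw cop (fun u v => sw cop (fun s t => g (u * s) (v * t)) (f2 y)) (f1 x)).
by rewrite f1_cop //; apply: eq_bigr => r _; rewrite f2_cop //; multilinear.
Qed.

Lemma sw_antipode_coalg_hom f a :
  coalg_hom cop eps f -> sw cop (fun x y => S (f x) * f y) a = eps a *: 1.
Proof.
move=> f_hom; have [_ f_cop] := coalg_hom_comultiplicative f_hom; case: f_hom => _ _ f_eps.
have Sxy : bilinear_map (fun x y => S x * y) by multilinear.
by rewrite -(f_cop _ Sxy) antipodel f_eps.
Qed.

Lemma sw4_antipode_contract f (c d : H -> H) a :
  coalg_hom cop eps f -> linear c -> linear d ->
  sw4 (fun x y z w => c x * S (f y) * f z * d w) a = sw cop (fun x w => c x * d w) a.
Proof.
move=> f_hom c_lin d_lin; have f_lin : linear f by case: f_hom.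
apply: eq_bigr => p _.
rewrite -(@sw_coassoc (fun x y z => c p.1 * S (f x) * f y * d z)); last by multilinear.
rewrite -[RHS](@sw_counitl (fun w => c p.1 * d w)); last by multilinear.
apply: eq_bigr => q _.
rewrite -[LHS]/(sw cop (fun u v => c p.1 * S (f u) * f v * d q.2) q.1).
rewrite (eq_sw (g' := fun u v => c p.1 * (S (f u) * f v) * d q.2)) => [|*].
  by rewrite sw_mulr sw_mull sw_antipode_coalg_hom // -scalerAr mulr1 -scalerAl.
by rewrite !mulrA.
Qed.

(** * Rota-Baxter systems *)

Section RotaBaxterSystem.
Variables (B1 B2 : H -> H).
Hypotheses (B1_hom : coalg_hom cop eps B1) (B2_hom : coalg_hom cop eps B2).
Hypotheses (B1_1 : B1 1 = 1) (B2_1 : B2 1 = 1).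
Hypothesis RB1 :
  forall a b, B1 a * B1 b = B1 (sw cop (fun x y => B1 x * b * S (B2 y)) a).
Hypothesis RB2 :
  forall a b, B2 a * B2 b = B2 (sw cop (fun x y => B1 x * b * S (B2 y)) a).

Local Notation sigma := (RB_cocycle cop S B1 B2).

Let B1_lin : linear B1. Proof. by case: B1_hom. Qed.
Let B2_lin : linear B2. Proof. by case: B2_hom. Qed.

Lemma B1_cocycle a : B1 (sigma a) = B1 a.
Proof.
have := RB1 a 1; rewrite B1_1 mulr1 => ->; congr B1.
by apply: eq_sw => x y; rewrite mulr1.
Qed.

Lemma B2_cocycle a : B2 (sigma a) = B2 a.
Proof.
have := RB2 a 1; rewrite B2_1 mulr1 => ->; congr B2.
by apply: eq_sw => x y; rewrite mulr1.
Qed.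

Lemma cocycle_comultiplicative : comultiplicative sigma.
Proof.
have sigma_bil : bilinear_map (fun x y => B1 x * S (B2 y)) by multilinear.
split=> [|g g_bil a]; first exact: (sw_linear sigma_bil).
pose G x1 x2 y1 y2 := g (B1 x1 * S (B2 y1)) (B1 x2 * S (B2 y2)).
have G_quad : quadrilinear_map G by rewrite /G; multilinear.
have B1_morph := coalg_hom_comultiplicative B1_hom.
have SB2_morph :=
  comultiplicative_comp antipode_comultiplicative (coalg_hom_comultiplicative B2_hom).
transitivity (sw4 G a).
  have -> : sigma a = \sum_(p <- cop a) B1 p.1 * S (B2 p.2) by [].
  rewrite (linear_for_sum (sw_linear g_bil)) sw4_coassoc //.
  apply: eq_bigr => p _.
  by rewrite (sw_mul_comultiplicative _ _ B1_morph SB2_morph g_bil).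
rewrite sw4_swap23 // sw4_coassoc; last by rewrite /G; multilinear.
apply: eq_bigr => p _; rewrite /RB_cocycle /sw (bilinear_suml g_bil).
by apply: eq_bigr => r _; rewrite (bilinear_sumr g_bil).
Qed.

Lemma RB_hopf_B2_cocycle a b : B2 (sigma a) * B2 b =
  B2 (\sum_(p <- cop (sigma a)) \sum_(q <- cop p.2) p.1 * B2 q.1 * b * S (B2 q.2)).
Proof.
have sigma_lin : linear sigma := cocycle_comultiplicative.1.
rewrite B2_cocycle RB2; congr B2.
rewrite -[RHS]/(sw3 (fun x y z => x * B2 y * b * S (B2 z)) (sigma a)).
rewrite (sw3_comultiplicative _ cocycle_comultiplicative); last by multilinear.
rewrite (eq_sw3 (g' := fun x y z => sigma x * B2 y * b * S (B2 z))) => [|*]; last first.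
  by rewrite !B2_cocycle.
rewrite (eq_sw (g' := fun x w => B1 x * (b * S (B2 w)))) => [|*]; last by rewrite mulrA.
rewrite -(@sw4_antipode_contract B2 B1 (fun w => b * S (B2 w))) //; last by multilinear.
rewrite sw4_coassoc; last by multilinear.
apply: eq_bigr => p _; rewrite exchange_big /=; apply: eq_bigr => q _.
by rewrite /RB_cocycle /sw !mulr_suml; apply: eq_bigr => r _; rewrite !mulrA.
Qed.

Lemma RB_hopf_B1S_cocycle x a b : sigma a = S x ->
  B1 (S x) * B1 (S b) =
  B1 (S (\sum_(p <- cop x) \sum_(q <- cop p.2) p.1 * B1 (S q.1) * b * S (B1 (S q.2)))).
Proof.
move=> sigma_a; have sigma_lin : linear sigma := cocycle_comultiplicative.1.
rewrite -sigma_a B1_cocycle RB1; congr B1.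
have -> : x = S (sigma a) by rewrite sigma_a antipodeK.
rewrite -[\sum_(p <- _) _]/(sw3 (fun u v w => u * B1 (S v) * b * S (B1 (S w))) (S (sigma a))).
rewrite (lin_sw3 _ _ antipode_linear).
rewrite (eq_sw3 (g' := fun u v w => B1 (S w) * S b * S (B1 (S v)) * S u)) => [|*]; last first.
  by rewrite !antipodeM antipodeK !mulrA.
have S_sigma_morph :=
  comultiplicative_comp antipode_comultiplicative cocycle_comultiplicative.
rewrite (sw3_comultiplicative _ S_sigma_morph); last by multilinear.
rewrite (eq_sw3 (g' := fun u v w => B1 w * S b * S (B1 v) * sigma u)) => [|*]; last first.
  by rewrite !antipodeK !B1_cocycle.
rewrite sw3_swap12; last by multilinear.
rewrite sw3_swap23; last by multilinear.
rewrite sw3_swap12; last by multilinear.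
have B1Sb_lin : linear (fun x => B1 x * S b) by multilinear.
have SB2_lin : linear (fun x => S (B2 x)) by multilinear.
rewrite -(sw4_antipode_contract _ B1_hom B1Sb_lin SB2_lin).
apply: eq_bigr => p _; apply: eq_bigr => q _ /=.
by rewrite /RB_cocycle -sw_mull; apply: eq_sw => *; rewrite !mulrA.
Qed.

End RotaBaxterSystem.

End CocommutativeHopf.

End SweedlerCalculus.

Unset Implicit Arguments.
Set Strict Implicit.

Theorem mainTheorem5 (F : fieldType) (hF : [pchar F] =i pred0)
  (H : algType F) (cop : H -> seq (H * H)) (eps : H -> F) (S : H -> H)
  (B1 B2 : H -> H) :
  RB_system cop eps S B1 B2 ->
  (forall c : H, exists a : H, RB_cocycle cop S B1 B2 a = c) ->
  RB_hopf cop eps S B2 /\ RB_hopf cop eps S (B1 \o S).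
Proof.
move=> [hopf [B1_hom B2_hom] [B1_1 B2_1] RB1 RB2] cocycle_onto; split.
- split=> // x b; have [a <-] := cocycle_onto x.
  by apply: (RB_hopf_B2_cocycle hopf).
- split=> [||x b /=]; first by [].
  + by apply: coalg_hom_comp => //; apply: antipode_coalg_hom.
  + have [a sigma_a] := cocycle_onto (S x).
    exact: (RB_hopf_B1S_cocycle hopf B1_hom B2_hom B1_1 RB1 b sigma_a).
Qed.
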